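(* Let $q\neq-1$ be real and $n\ge0$. Then $$U_n(x,s,q)=\sum_{k=0}^{\lfloor n/2\rfloor}q^{k^2}\begin{bmatrix} n-k\\ k\end{bmatrix}(1+q^{k+1})\cdots(1+q^{n-k})\,s^kx^{n-2k}.$$
   Context: $U_n(x,s,q)$ is defined by $U_{-1}=0$, $U_0=1$, $U_n(x,s,q)=(1+q^{n})x\,U_{n-1}(x,s,q)+q^{n-1}s\,U_{n-2}(x,s,q)$ for $n\ge1$. Notation: $[m]=1+q+\cdots+q^{m-1}$, $[m]!=[1]\cdots[m]$, $\begin{bmatrix} m\\ j\end{bmatrix}=\frac{[m]!}{[j]![m-j]!}$. Empty products equal $1$. *)

From mathcomp Require Import all_boot all_order all_algebra.
Set Implicit Arguments. Unset Strict Implicit. Unset Printing Implicit Defensive.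
Import Order.TTheory GRing.Theory Num.Theory.
Local Open Scope ring_scope.

Definition qint (R : nzRingType) (q : R) (m : nat) : R := \sum_(i < m) q ^+ i.

Definition qfact (R : nzRingType) (q : R) (m : nat) : R :=
  \prod_(i < m) qint q i.+1.

Definition qbinom (R : fieldType) (q : R) (m j : nat) : R :=
  qfact q m / (qfact q j * qfact q (m - j)).

(* U_n(x,s,q): U_{-1} = 0, U_0 = 1,
   U_n = (1+q^n) x U_{n-1} + q^(n-1) s U_{n-2}  (n >= 1).
   Here U_1 = (1+q) x (since U_{-1} = 0), and for n >= 0,
   U_{n+2} = (1+q^(n+2)) x U_{n+1} + q^(n+1) s U_n. *)
Fixpoint Upoly (R : nzRingType) (x s q : R) (n : nat) : R :=
  match n with
  | 0 => 1
  | 1 => (1 + q) * x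
  | (m.+1 as n').+1 => (1 + q ^+ n'.+1) * x * Upoly x s q n' + q ^+ n' * s * Upoly x s q m
  end.

From mathcomp Require Import all_boot all_order all_algebra.
From mathcomp Require Import ring zify.
Import Order.TTheory GRing.Theory Num.Theory.
Set Implicit Arguments. Unset Strict Implicit. Unset Printing Implicit Defensive.
Local Open Scope ring_scope.

(** Let [Utrunc n k] be the [k]-th summand, set to [0] when [2k > n].  The
   recurrence of [U] holds termwise: [Utrunc (n+2) (j+1)] equals
   [(1 + q^(n+2)) x Utrunc (n+1) (j+1) + q^(n+1) s Utrunc n j], which after clearing the
   common factors is the q-Pascal rule
   [[m+1, j+1] = [m, j+1] + q^(m-j) [m, j]] combined with the absorption
   identity [(1 - q^(m-j)) [m, j] = (1 - q^(j+1)) [m, j+1]].  The hypothesis [q <> -1] is only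
   needed to make the Gaussian binomials well defined: over an ordered field,
   [[m] = 0] forces [q^m = 1] with [q <> 1]. *)

Section QInt.
Variables (R : comNzRingType) (q : R).

Lemma qintS m : qint q m.+1 = qint q m + q ^+ m.
Proof. by rewrite /qint big_ord_recr. Qed.

Lemma qint_add a b : qint q (a + b) = qint q a + q ^+ a * qint q b.
Proof.
elim: b => [|b IH]; first by rewrite addn0 /qint big_ord0 mulr0 addr0.
by rewrite addnS !qintS IH exprD; ring.
Qed.

Lemma qint_telescope m : (1 - q) * qint q m = 1 - q ^+ m.
Proof.
elim: m => [|m IH]; first by rewrite /qint big_ord0 mulr0 subrr.
by rewrite qintS mulrDr IH exprS; ring.
Qed.

Lemma qint1 m : qint 1 m = m%:R :> R.
Proof. by rewrite /qint (eq_bigr (fun=> 1)) ?sumr_const ?card_ord // => i; rewrite expr1n. Qed.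

Lemma qfactS m : qfact q m.+1 = qfact q m * qint q m.+1.
Proof. by rewrite /qfact big_ord_recr. Qed.

Lemma qfact0 : qfact q 0 = 1.
Proof. by rewrite /qfact big_ord0. Qed.

End QInt.

Lemma qint_neq0 (R : realDomainType) (q : R) m : q != -1 -> qint q m.+1 != 0.
Proof.
move=> qN1; have [->|q1] := eqVneq q 1; first by rewrite qint1 pnatr_eq0.
apply: contra_neq q1 => qm0.
have /eqP := qint_telescope q m.+1; rewrite qm0 mulr0 eq_sym subr_eq0 => /eqP qm1.
have : `|q| ^+ m.+1 == 1 by rewrite -normrX -qm1 normr1.
rewrite pexpr_eq1 // => /eqP; have [q0|q0] := lerP 0 q.
  by rewrite ger0_norm.
by rewrite ltr0_norm // => /eqP; rewrite eqr_oppLR => /eqP qe; rewrite qe eqxx in qN1.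
Qed.

Section QBinom.
Variables (R : fieldType) (q : R).
Hypothesis qint_nz : forall m, qint q m.+1 != 0.

Lemma qfact_neq0 m : qfact q m != 0.
Proof.
elim: m => [|m IH]; first by rewrite qfact0 oner_eq0.
by rewrite qfactS mulf_neq0.
Qed.

Lemma qbinomn0 m : qbinom q m 0 = 1.
Proof. by rewrite /qbinom subn0 qfact0 mul1r divff // qfact_neq0. Qed.

Lemma qbinomnn m : qbinom q m m = 1.
Proof. by rewrite /qbinom subnn qfact0 mulr1 divff // qfact_neq0. Qed.

Lemma qbinomS j r :
  qbinom q (j + r).+2 j.+1 =
  qbinom q (j + r).+1 j.+1 + q ^+ r.+1 * qbinom q (j + r).+1 j.
Proof.
rewrite /qbinom.
have -> : ((j + r).+2 - j.+1 = r.+1)%N by lia.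
have -> : ((j + r).+1 - j.+1 = r)%N by lia.
have -> : ((j + r).+1 - j = r.+1)%N by lia.
rewrite qfactS (qfactS q j) (qfactS q r).
have -> : ((j + r).+2 = r.+1 + j.+1)%N by lia.
by rewrite qint_add; field; rewrite !qfact_neq0 !qint_nz.
Qed.

Lemma qbinom_absorb j r :
  (1 - q ^+ r.+1) * qbinom q (j + r).+1 j =
  (1 - q ^+ j.+1) * qbinom q (j + r).+1 j.+1.
Proof.
rewrite -!qint_telescope /qbinom.
have -> : ((j + r).+1 - j.+1 = r)%N by lia.
have -> : ((j + r).+1 - j = r.+1)%N by lia.
rewrite (qfactS q j) (qfactS q r).
by field; rewrite !qfact_neq0 !qint_nz.
Qed.

End QBinom.

Section Expansion.
Variables (R : fieldType) (x s q : R).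
Hypothesis qint_nz : forall m, qint q m.+1 != 0.

Definition Uterm n k : R :=
  q ^+ (k * k) * qbinom q (n - k) k
  * (\prod_(k.+1 <= i < (n - k).+1) (1 + q ^+ i))
  * s ^+ k * x ^+ (n - 2 * k).

Definition Utrunc n k : R := if (2 * k <= n)%N then Uterm n k else 0.

Lemma Utrunc_rec0 n : Utrunc n.+2 0 = (1 + q ^+ n.+2) * x * Utrunc n.+1 0.
Proof.
rewrite /Utrunc /Uterm /= !subn0 !muln0 !qbinomn0 // big_nat_recr //= !expr0.
by rewrite (exprS x n.+1); ring.
Qed.

Lemma Uterm_rec_edge j :
  Uterm (j + j).+2 j.+1 = q ^+ (j + j).+1 * s * Uterm (j + j) j.
Proof.
rewrite /Uterm.
have -> : ((j + j).+2 - j.+1 = j.+1)%N by lia.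
have -> : ((j + j) - j = j)%N by lia.
have -> : ((j + j).+2 - 2 * j.+1 = 0)%N by lia.
have -> : ((j + j) - 2 * j = 0)%N by lia.
have -> : (j.+1 * j.+1 = j * j + (j + j).+1)%N by nia.
rewrite !qbinomnn // !big_geq // !(exprS, exprD, expr0); ring.
Qed.

Lemma Uterm_rec j r :
  Uterm (j + j + r).+3 j.+1 =
  (1 + q ^+ (j + j + r).+3) * x * Uterm (j + j + r).+2 j.+1
  + q ^+ (j + j + r).+2 * s * Uterm (j + j + r).+1 j.
Proof.
rewrite /Uterm.
have -> : ((j + j + r).+3 - j.+1 = (j + r).+2)%N by lia.
have -> : ((j + j + r).+2 - j.+1 = (j + r).+1)%N by lia.
have -> : ((j + j + r).+1 - j = (j + r).+1)%N by lia.
have -> : ((j + j + r).+3 - 2 * j.+1 = r.+1)%N by lia.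
have -> : ((j + j + r).+2 - 2 * j.+1 = r)%N by lia.
have -> : ((j + j + r).+1 - 2 * j = r.+1)%N by lia.
have -> : (j.+1 * j.+1 = j * j + (j + j).+1)%N by nia.
rewrite big_nat_recr /=; last by lia.
rewrite (big_ltn (m := j.+1)); last by lia.
rewrite qbinomS //.
set Q := \prod_(j.+2 <= i < (j + r).+2) _.
set B := qbinom q (j + r).+1 j.+1; set B' := qbinom q (j + r).+1 j.
have absorb := qbinom_absorb qint_nz j r; rewrite -/B -/B' in absorb.
apply/eqP; rewrite -subr_eq0; apply/eqP; rewrite !(exprS, exprD).
(* the difference is a multiple of the absorption identity *)
transitivity (q ^+ (j * j) * Q * s * s ^+ j * x * x ^+ r
   * (q ^+ j * q ^+ j * q ^+ j * q ^+ r * q * q * q)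
   * ((1 - q * q ^+ j) * B - (1 - q * q ^+ r) * B')); first ring.
by rewrite -!exprS absorb subrr mulr0.
Qed.

Lemma Utrunc_rec n j :
  Utrunc n.+2 j.+1 =
  (1 + q ^+ n.+2) * x * Utrunc n.+1 j.+1 + q ^+ n.+1 * s * Utrunc n j.
Proof.
rewrite /Utrunc; have [ltn|len] := ltnP n (2 * j)%N.
  have -> : (2 * j.+1 <= n.+2)%N = false by lia.
  have -> : (2 * j.+1 <= n.+1)%N = false by lia.
  by rewrite !mulr0 addr0.
have -> : (2 * j.+1 <= n.+2)%N by lia.
have [->|neq] := eqVneq n (2 * j)%N.
  have -> : (2 * j.+1 <= (2 * j).+1)%N = false by lia.
  have -> : (2 * j = j + j)%N by lia.
  by rewrite mulr0 add0r Uterm_rec_edge.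
have -> : (2 * j.+1 <= n.+1)%N by lia.
have [r ->] : exists r, n = (j + j + r).+1 by exists (n - (j + j)).-1; lia.
exact: Uterm_rec.
Qed.

Lemma sum_Utrunc n N :
  (n < N)%N -> \sum_(k < N) Utrunc n k = \sum_(k < n./2.+1) Uterm n k.
Proof.
move=> nN; rewrite (big_ord_widen N (Uterm n)); last by lia.
rewrite [RHS]big_mkcond /=; apply: eq_bigr => k _; rewrite /Utrunc.
by have -> : (k < n./2.+1)%N = (2 * k <= n)%N by apply/idP/idP; lia.
Qed.

Lemma Upoly_sum_Utrunc n : Upoly x s q n = \sum_(k < n.+1) Utrunc n k.
Proof.
suff: Upoly x s q n = \sum_(k < n.+1) Utrunc n k /\
      Upoly x s q n.+1 = \sum_(k < n.+2) Utrunc n.+1 k by case.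
elim: n => [|n [IHn IHn1]].
  split; first by rewrite big_ord1 /Utrunc /Uterm /= qbinomn0 // big_geq // !expr0 !mulr1.
  rewrite big_ord_recr big_ord1 /Utrunc /Uterm /= qbinomn0 // big_nat1 !expr0 expr1 addr0.
  by ring.
split=> //; rewrite [Upoly _ _ _ n.+2]/= -/(Upoly x s q n) -/(Upoly x s q n.+1).
rewrite IHn1 IHn [RHS]big_ord_recl Utrunc_rec0.
rewrite [in RHS](eq_bigr (fun i : 'I_n.+2 =>
  (1 + q ^+ n.+2) * x * Utrunc n.+1 i.+1 + q ^+ n.+1 * s * Utrunc n i)) => [|i _];
  last exact: Utrunc_rec.
rewrite big_split -!mulr_sumr addrA -mulrDr.
have -> : Utrunc n.+1 0 + \sum_(i < n.+2) Utrunc n.+1 i.+1 =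
          \sum_(i < n.+3) Utrunc n.+1 i by rewrite [RHS]big_ord_recl.
by rewrite !sum_Utrunc.
Qed.

End Expansion.

Theorem theorem2p3 (R : realFieldType) (x s q : R) (n : nat) :
  q != -1 ->
  Upoly x s q n =
  \sum_(k < n./2.+1)
     q ^+ (k * k) * qbinom q (n - k) k
     * (\prod_(k.+1 <= i < (n - k).+1) (1 + q ^+ i))
     * s ^+ k * x ^+ (n - 2 * k).
Proof.
move=> qN1; have qint_nz m := qint_neq0 m qN1.
by rewrite Upoly_sum_Utrunc // sum_Utrunc.
Qed.
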